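(* Let $V$ be a unitary irreducible lowest weight representation of $\hat{G}_{\Lambda,\Lambda_F}$ with lowest weight $h$. If $\dot I,\dot J$ are sequences and $\lambda_1,\lambda_2,\lambda_3,\lambda_4\in\{1,\dots,\Lambda_F\}$ satisfy $\dot I\lambda_1\lambda_3>\dot J\lambda_2\lambda_4$, then $h_I(\lambda_2;\dot J;\lambda_4)-h_I(\lambda_1;\dot I;\lambda_3)$ is a non-negative integer.
   Context: Fix positive integers $\Lambda,\Lambda_F$. A sequence $\dot I=i_1\cdots i_a$ is a finite, possibly empty, sequence of integers in $\{1,\dots,\Lambda\}$; $\#(\dot I)=a$, juxtaposition denotes concatenation, and $\delta^{\dot I}_{\dot J}$ is $1$ if $\dot I=\dot J$ and $0$ otherwise (similarly for integers). Let $\mathcal{T}_o$ be the complex vector space with basis the symbols $\bar\phi^{\lambda_1}\otimes s^{\dot K}\otimes\phi^{\lambda_2}$, $1\le\lambda_1,\lambda_2\le\Lambda_F$, $\dot K$ any sequence. For all sequences $\dot I,\dot J$ and all $\lambda_i\in\{1,\dots,\Lambda_F\}$ define linear operators on $\mathcal{T}_o$: first kind: $\bar\Xi^{\lambda_1}_{\lambda_2}\otimes f^{\dot I}_{\dot J}\otimes\Xi^{\lambda_3}_{\lambda_4}(\bar\phi^{\lambda_5}\otimes s^{\dot K}\otimes\phi^{\lambda_6})=\delta^{\lambda_5}_{\lambda_2}\delta^{\dot K}_{\dot J}\delta^{\lambda_6}_{\lambda_4}\,\bar\phi^{\lambda_1}\otimes s^{\dot I}\otimes\phi^{\lambda_3}$;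 second kind: $\bar\Xi^{\lambda_1}_{\lambda_2}\otimes l^{\dot I}_{\dot J}(\bar\phi^{\lambda_3}\otimes s^{\dot K}\otimes\phi^{\lambda_4})=\delta^{\lambda_3}_{\lambda_2}\sum_{\dot K_1\dot K_2=\dot K}\delta^{\dot K_1}_{\dot J}\,\bar\phi^{\lambda_1}\otimes s^{\dot I\dot K_2}\otimes\phi^{\lambda_4}$; third kind: $r^{\dot I}_{\dot J}\otimes\Xi^{\lambda_1}_{\lambda_2}(\bar\phi^{\lambda_3}\otimes s^{\dot K}\otimes\phi^{\lambda_4})=\delta^{\lambda_4}_{\lambda_2}\sum_{\dot K_1\dot K_2=\dot K}\delta^{\dot K_2}_{\dot J}\,\bar\phi^{\lambda_3}\otimes s^{\dot K_1\dot I}\otimes\phi^{\lambda_1}$; fourth kind: $\sigma^{\dot I}_{\dot J}(\bar\phi^{\lambda_1}\otimes s^{\dot K}\otimes\phi^{\lambda_2})=\sum_{\dot K_1\dot K_2\dot K_3=\dot K}\delta^{\dot K_2}_{\dot J}\,\bar\phi^{\lambda_1}\otimes s^{\dot K_1\dot I\dot K_3}\otimes\phi^{\lambda_2}$; sums over all ways to write $\dot K$ as a concatenation of possibly empty sequences. The open string algebra $\hat{G}_{\Lambda,\Lambda_F}$ is the Lie algebra (commutator bracket) of operators on $\mathcal{T}_o$ spanned by these operators. Ordering: for finite sequences of positive integers $a=a_1\cdots a_m$, $b=b_1\cdots b_n$, $a>b$ means $m>n$, or $m=n\ne0$ and $a_r>b_r$ at the first index $r$ where they differ (applied to concatenations like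 $\dot I\lambda_1\lambda_3$). $G^{00}$ is the span of all $\bar\Xi^{\lambda_1}_{\lambda_1}\otimes f^{\dot I}_{\dot I}\otimes\Xi^{\lambda_2}_{\lambda_2}$, $\bar\Xi^{\lambda}_{\lambda}\otimes l^{\dot I}_{\dot I}$, $r^{\dot I}_{\dot I}\otimes\Xi^{\lambda}_{\lambda}$, $\sigma^{\dot I}_{\dot I}$. $G^-$ is the span of all operators of the four kinds with $\#(\dot I)<\#(\dot J)$, together with those with $\#(\dot I)=\#(\dot J)$ and $\dot J\lambda_2\lambda_4>\dot I\lambda_1\lambda_3$ (first kind), $\dot J\lambda_2>\dot I\lambda_1$ (second and third kind), $\dot J>\dot I$ (fourth kind). $\omega$ is the antilinear anti-involution swapping upper and lower indices: $\omega(\bar\Xi^{\lambda_1}_{\lambda_2}\otimes f^{\dot I}_{\dot J}\otimes\Xi^{\lambda_3}_{\lambda_4})=\bar\Xi^{\lambda_2}_{\lambda_1}\otimes f^{\dot J}_{\dot I}\otimes\Xi^{\lambda_4}_{\lambda_3}$, $\omega(\bar\Xi^{\lambda_1}_{\lambda_2}\otimes l^{\dot I}_{\dot J})=\bar\Xi^{\lambda_2}_{\lambda_1}\otimes l^{\dot J}_{\dot I}$, $\omega(r^{\dot I}_{\dot J}\otimes\Xi^{\lambda_1}_{\lambda_2})=r^{\dot J}_{\dot I}\otimes\Xi^{\lambda_2}_{\lambda_1}$, $\omega(\sigma^{\dot I}_{\dot J})=\sigma^{\dot J}_{\dot I}$. A lowest weight $h$ is a linear functional on $G^{00}$ real on the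 spanning operators; $h_I(\lambda_1;\dot I;\lambda_2)$ denotes its value on $\bar\Xi^{\lambda_1}_{\lambda_1}\otimes f^{\dot I}_{\dot I}\otimes\Xi^{\lambda_2}_{\lambda_2}$. A unitary lowest weight representation with lowest weight $h$ is a representation $V$ generated by a vector $v\ne0$ with $G^-v=0$ and $Hv=h(H)v$ for $H\in G^{00}$, carrying a positive definite Hermitian form with $\langle Xu,w\rangle=\langle u,\omega(X)w\rangle$ for all $X$. *)

From HB Require Import structures.
From mathcomp Require Import all_boot all_order all_algebra.
From mathcomp Require Import reals complex.
Set Implicit Arguments. Unset Strict Implicit. Unset Printing Implicit Defensive.
Import Order.TTheory GRing.Theory Num.Theory.
Local Open Scope ring_scope.

(** Sequences are [seq nat] with entries in {1,...,Lam}; the "flavour"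
    indices lambda are [nat] in {1,...,LamF} (paper's values, no shift). *)
Definition seq_ok (Lam : nat) (s : seq nat) : bool := all (fun i => (0 < i <= Lam)%N) s.
Definition lam_ok (LamF : nat) (l : nat) : bool := (0 < l <= LamF)%N.

(** Basis symbols  phibar^{l1} (x) s^K (x) phi^{l2}  of T_o, as triples. *)
Definition basis := (nat * seq nat * nat)%type.
Definition basis_ok (Lam LamF : nat) (b : basis) : bool :=
  [&& lam_ok LamF b.1.1, seq_ok Lam b.1.2 & lam_ok LamF b.2].

(** Labels of the spanning operators of the open string algebra. *)
Inductive gen : Type :=
| Gen1 (l1 l2 : nat) (Is Js : seq nat) (l3 l4 : nat)
    (* Xibar^{l1}_{l2} (x) f^I_J (x) Xi^{l3}_{l4} *)
| Gen2 (l1 l2 : nat) (Is Js : seq nat)   (* Xibar^{l1}_{l2} (x) l^I_J *)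
| Gen3 (Is Js : seq nat) (l1 l2 : nat)   (* r^I_J (x) Xi^{l1}_{l2} *)
| Gen4 (Is Js : seq nat).                (* sigma^I_J *)

Definition gen_ok (Lam LamF : nat) (g : gen) : bool :=
  match g with
  | Gen1 l1 l2 Is Js l3 l4 => [&& lam_ok LamF l1, lam_ok LamF l2, seq_ok Lam Is,
                               seq_ok Lam Js, lam_ok LamF l3 & lam_ok LamF l4]
  | Gen2 l1 l2 Is Js => [&& lam_ok LamF l1, lam_ok LamF l2, seq_ok Lam Is & seq_ok Lam Js]
  | Gen3 Is Js l1 l2 => [&& seq_ok Lam Is, seq_ok Lam Js, lam_ok LamF l1 & lam_ok LamF l2]
  | Gen4 Is Js => seq_ok Lam Is && seq_ok Lam Js
  end.

Definition split2 (K : seq nat) : seq (seq nat * seq nat) :=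
  [seq (take k K, drop k K) | k <- iota 0 (size K).+1].
Definition split3 (K : seq nat) : seq (seq nat * seq nat * seq nat) :=
  [seq (take i K, drop i (take j K), drop j K)
     | j <- iota 0 (size K).+1, i <- iota 0 j.+1].

(** Action of a spanning operator on a basis symbol: the result is the sum
    of the basis symbols in the returned list (all coefficients are 1,
    counted with multiplicity), exactly as in the defining formulas. *)
Definition act (g : gen) (b : basis) : seq basis :=
  let: (m1, K, m2) := b in
  match g with
  | Gen1 l1 l2 Is Js l3 l4 =>
      if [&& m1 == l2, K == Js & m2 == l4] then [:: (l1, Is, l3)] else [::]
  | Gen2 l1 l2 Is Js =>
      if m1 == l2 then [seq (l1, Is ++ p.2, m2) | p <- split2 K & p.1 == Js] else [::]
  | Gen3 Is Js l1 l2 =>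
      if m2 == l2 then [seq (m1, p.1 ++ Is, l1) | p <- split2 K & p.2 == Js] else [::]
  | Gen4 Is Js =>
      [seq (m1, t.1.1 ++ Is ++ t.2, m2) | t <- split3 K & t.1.2 == Js]
  end.

Section Coefs.
Variable C : numClosedFieldType.

(** Coefficient of the basis symbol b' in X(b), where X = sum_i c_i g_i. *)
Definition opcoef (X : seq (C * gen)) (b b' : basis) : C :=
  \sum_(p <- X) p.1 * (count_mem b' (act p.2 b))%:R.

Definition brcoef (g1 g2 : gen) (b b' : basis) : C :=
  (count_mem b' (flatten [seq act g1 x | x <- act g2 b]))%:R
  - (count_mem b' (flatten [seq act g2 x | x <- act g1 b]))%:R.
End Coefs.

Fixpoint lexgt (a b : seq nat) : bool :=
  match a, b with
  | x :: a', y :: b' => (y < x)%N || ((x == y) && lexgt a' b')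
  | _, _ => false
  end.
Definition seqgt (a b : seq nat) : bool :=
  (size b < size a)%N || ((size a == size b) && lexgt a b).

(** Spanning operators of G^{00} and of G^-. *)
Definition is_diag (g : gen) : bool :=
  match g with
  | Gen1 l1 l2 Is Js l3 l4 => [&& l1 == l2, Is == Js & l3 == l4]
  | Gen2 l1 l2 Is Js => (l1 == l2) && (Is == Js)
  | Gen3 Is Js l1 l2 => (Is == Js) && (l1 == l2)
  | Gen4 Is Js => Is == Js
  end.

Definition is_minus (g : gen) : bool :=
  match g with
  | Gen1 l1 l2 Is Js l3 l4 => (size Is < size Js)%N ||
      ((size Is == size Js) && seqgt (Js ++ [:: l2; l4]) (Is ++ [:: l1; l3]))
  | Gen2 l1 l2 Is Js => (size Is < size Js)%N ||
      ((size Is == size Js) && seqgt (Js ++ [:: l2]) (Is ++ [:: l1]))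
  | Gen3 Is Js l1 l2 => (size Is < size Js)%N ||
      ((size Is == size Js) && seqgt (Js ++ [:: l2]) (Is ++ [:: l1]))
  | Gen4 Is Js => (size Is < size Js)%N || ((size Is == size Js) && seqgt Js Is)
  end.

Definition omega (g : gen) : gen :=
  match g with
  | Gen1 l1 l2 Is Js l3 l4 => Gen1 l2 l1 Js Is l4 l3
  | Gen2 l1 l2 Is Js => Gen2 l2 l1 Js Is
  | Gen3 Is Js l1 l2 => Gen3 Js Is l2 l1
  | Gen4 Is Js => Gen4 Js Is
  end.

Section Rep.
Variables (Lam LamF : nat) (C : numClosedFieldType) (V : lmodType C).

(** rho : spanning operators -> End(V), extended linearly to the span.
    It is a representation of the open string algebra iff each rho g is
    linear, the linear extension is well defined (a combination that is
    the zero operator on T_o goes to 0), and brackets are preserved. *)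
Definition is_rep (rho : gen -> V -> V) : Prop :=
  [/\ (forall g, gen_ok Lam LamF g -> forall (a : C) (u w : V),
          rho g (a *: u + w) = a *: rho g u + rho g w),
      (forall X : seq (C * gen), all (gen_ok Lam LamF) (map snd X) ->
          (forall b, basis_ok Lam LamF b -> forall b', opcoef X b b' = 0) ->
          forall u, \sum_(p <- X) p.1 *: rho p.2 u = 0) &
      (forall g1 g2 (X : seq (C * gen)),
          gen_ok Lam LamF g1 -> gen_ok Lam LamF g2 ->
          all (gen_ok Lam LamF) (map snd X) ->
          (forall b, basis_ok Lam LamF b -> forall b',
              opcoef X b b' = brcoef C g1 g2 b b') ->
          forall u, \sum_(p <- X) p.1 *: rho p.2 u
                    = rho g1 (rho g2 u) - rho g2 (rho g1 u))].

Definition invariant_subspace (rho : gen -> V -> V) (S : V -> Prop) : Prop :=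
  [/\ S 0, (forall (a : C) u w, S u -> S w -> S (a *: u + w)) &
      (forall g, gen_ok Lam LamF g -> forall u, S u -> S (rho g u))].

Definition irreducible (rho : gen -> V -> V) : Prop :=
  forall S, invariant_subspace rho S -> (exists2 u, u != 0 & S u) -> forall u, S u.

(** V is a lowest weight representation with lowest weight h (h given by its
    values on the spanning operators of G^{00}, required to be real) and
    lowest weight vector v generating V. *)
Definition lowest_weight (rho : gen -> V -> V) (h : gen -> C) (v : V) : Prop :=
  [/\ v != 0,
      (forall g, gen_ok Lam LamF g -> is_diag g -> h g \is Num.real),
      (forall S, invariant_subspace rho S -> S v -> forall u, S u),
      (forall g, gen_ok Lam LamF g -> is_minus g -> rho g v = 0) &
      (forall g, gen_ok Lam LamF g -> is_diag g -> rho g v = h g *: v)].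

(** Positive definite Hermitian form (linear in the first argument) for which
    omega is the adjoint. *)
Definition unitary_form (rho : gen -> V -> V) (form : V -> V -> C) : Prop :=
  [/\ (forall (a : C) u1 u2 w, form (a *: u1 + u2) w = a * form u1 w + form u2 w),
      (forall u w, form w u = (form u w)^*),
      (forall u, u != 0 -> 0 < form u u) &
      (forall g, gen_ok Lam LamF g -> forall u w,
          form (rho g u) w = form u (rho (omega g) w))].
End Rep.

Definition hI (C : Type) (h : gen -> C) (l1 : nat) (Is : seq nat) (l2 : nat) : C :=
  h (Gen1 l1 l1 Is Is l2 l2).

(** The operator [A] of the first kind sending the basis symbol [J] to [I]
    and its adjoint [B] (which annihilates [v], as [I > J]) generate together
    with [H = E_JJ - E_II] a copy of sl2, and [v] is a lowest weight vector of
    weight [c = h_I(J) - h_I(I)].  With [w_n = A^n v] one gets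
    [B w_(n+1) = (n+1)(c-n) w_n], hence [|w_(n+1)|^2 = (n+1)(c-n) |w_n|^2].
    Positivity of the norms forces [c >= n] as long as [w_n <> 0], and [w_n]
    can only vanish once [c] equals some natural number [n]; since [c] cannot
    exceed every natural number, [c] is a natural number. *)
From HB Require Import structures.
From mathcomp Require Import all_boot all_order all_algebra.
From mathcomp Require Import reals complex ring.
Set Implicit Arguments.
Unset Strict Implicit.
Import Order.TTheory GRing.Theory Num.Theory.
Local Open Scope ring_scope.

(** The operators of the first kind act on [T_o] as the matrix units [E_pq]. *)
Definition gen_unit (p q : basis) : gen := Gen1 p.1.1 q.1.1 p.1.2 q.1.2 p.2 q.2.

Lemma gen_unit_ok Lam LamF p q :
  basis_ok Lam LamF p -> basis_ok Lam LamF q -> gen_ok Lam LamF (gen_unit p q).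
Proof.
by case: p q => [[m1 K] m2] [[n1 L] n2] /and3P/=[-> -> ->] /and3P/=[-> -> ->].
Qed.

Lemma omega_gen_unit p q : omega (gen_unit p q) = gen_unit q p.
Proof. by []. Qed.

Lemma is_diag_gen_unit p : is_diag (gen_unit p p).
Proof. by rewrite /= !eqxx. Qed.

Lemma count_act_gen_unit p q b b' :
  count_mem b' (act (gen_unit p q) b) = (b == q) && (p == b').
Proof.
case: p q b => [[m1 K] m2] [[n1 L] n2] [[k1 M] k2] /=.
by rewrite !xpair_eqE; case: (k1 == n1); case: (M == L); case: (k2 == n2) => //=;
  case: (_ == b').
Qed.

Lemma brcoef_gen_unit (C : numClosedFieldType) p q r s b b' :
  brcoef C (gen_unit p q) (gen_unit r s) b b'
  = [&& b == s, r == q & p == b']%:R - [&& b == q, p == s & r == b']%:R.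
Proof.
have actE x y z : act (gen_unit x y) z = if z == y then [:: x] else [::].
  by case: x y z => [[? ?] ?] [[? ?] ?] [[? ?] ?]; rewrite /= !xpair_eqE andbA.
rewrite /brcoef !actE.
by case: (b == s); case: (b == q); rewrite /= ?cats0 ?count_act_gen_unit.
Qed.

Lemma lexgt_irr a : lexgt a a = false.
Proof. by elim: a => //= x a ->; rewrite ltnn eqxx. Qed.

Lemma seqgt_irr a : seqgt a a = false.
Proof. by rewrite /seqgt ltnn eqxx lexgt_irr. Qed.

Lemma is_minus_Gen1 l1 l2 Is Js l3 l4 :
  seqgt (Js ++ [:: l2; l4]) (Is ++ [:: l1; l3]) -> is_minus (Gen1 l1 l2 Is Js l3 l4).
Proof.
move=> gt /=; rewrite gt andbT.
by move: gt; rewrite /seqgt !size_cat /= ltn_add2r eqn_add2r => /orP[-> | /andP[/eqP -> _]];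
  rewrite ?eqxx ?orbT.
Qed.

Lemma complex_nat_unbounded (R : realType) (c : R[i]) : exists n : nat, ~~ (n%:R <= c).
Proof.
have [/complex_realP[x ->] | c_nreal] := boolP (c \is Num.real); last first.
  by exists 0%N; apply: contra c_nreal; apply: ger0_real.
exists (Num.bound `|x|); rewrite -(rmorph_nat (real_complex R)) lecR -ltNge.
exact: le_lt_trans (ler_norm x) (archi_boundP (normr_ge0 x)).
Qed.

Section UnitaryLowestWeight.
Variables (C : numClosedFieldType) (V : lmodType C).
Variables (e f H : V -> V) (form : V -> V -> C) (v : V) (c : C).
Hypothesis eZ : forall a u, e (a *: u) = a *: e u.
Hypothesis comm_fe : forall u, f (e u) - e (f u) = H u.
Hypothesis comm_He : forall u, H (e u) - e (H u) = - (e u *+ 2).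
Hypothesis f_v : f v = 0.
Hypothesis H_v : H v = c *: v.
Hypothesis v_neq0 : v != 0.
Hypothesis formZl : forall a u w, form (a *: u) w = a * form u w.
Hypothesis form_conj : forall u w, form w u = (form u w)^*.
Hypothesis form_gt0 : forall u, u != 0 -> 0 < form u u.
Hypothesis form_adj : forall u w, form (e u) w = form u (f w).

Local Notation w n := (iter n e v).
Local Notation norm2 n := (form (w n) (w n)).

Lemma H_iter n : H (w n) = (c - n.*2%:R) *: w n.
Proof.
elim: n => [|n IH]; first by rewrite subr0.
move/eqP: (comm_He (w n)); rewrite subr_eq => /eqP ->.
rewrite IH eZ -scaler_nat -scaleNr -scalerDl /=; congr (_ *: _).
by rewrite doubleS -addn2 natrD; ring.
Qed.

Lemma f_iterS n : f (w n.+1) = (n.+1%:R * (c - n%:R)) *: w n.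
Proof.
have e0 : e 0 = 0 by rewrite -[X in e X](scale0r 0) eZ scale0r.
elim: n => [|n IH].
  move/eqP: (comm_fe v); rewrite subr_eq => /eqP ->.
  by rewrite f_v e0 H_v addr0 mul1r subr0.
move/eqP: (comm_fe (w n.+1)); rewrite subr_eq => /eqP ->.
rewrite IH eZ -[e (w n)]/(w n.+1) H_iter -scalerDl; congr (_ *: _).
by rewrite -muln2 natrM -!natr1; ring.
Qed.

Lemma norm2_iterS n : norm2 n.+1 = (n.+1%:R * (c - n%:R))^* * norm2 n.
Proof.
by rewrite {1}[w n.+1]/= form_adj f_iterS form_conj formZl rmorphM /= -form_conj.
Qed.

Lemma form_ge0 u : 0 <= form u u.
Proof.
have [->|/form_gt0/ltW //] := eqVneq u 0.
by rewrite -(scale0r 0) formZl mul0r.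
Qed.

Lemma norm2_gt0_le n : 0 < norm2 n -> n%:R <= c.
Proof.
move=> gt0; have := form_ge0 (w n.+1).
rewrite norm2_iterS pmulr_lge0 // conjC_ge0 pmulr_rge0 ?ltr0Sn //.
by rewrite subr_ge0.
Qed.

Lemma unitary_lowest_weight_nat_or_ge n : (exists m : nat, c = m%:R) \/ n%:R <= c.
Proof.
suff [nat_c | [_ ->]] : (exists m : nat, c = m%:R) \/ (0 < norm2 n /\ n%:R <= c).
- by left.
- by right.
elim: n => [|n [nat_c | [gt0 le_nc]]].
- by right; split; [|apply: (@norm2_gt0_le 0)]; exact: form_gt0.
- by left.
have [-> | ne_cn] := eqVneq c n%:R; first by left; exists n.
have gt0S : 0 < norm2 n.+1.
  rewrite norm2_iterS pmulr_lgt0 // lt0r conjC_eq0 conjC_ge0 -lt0r.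
  by rewrite pmulr_rgt0 ?ltr0Sn // subr_gt0 lt_neqAle eq_sym ne_cn.
by right; split; last exact: norm2_gt0_le.
Qed.

End UnitaryLowestWeight.

Section Representation.
Variables (Lam LamF : nat) (C : numClosedFieldType) (V : lmodType C).
Variable rho : gen -> V -> V.
Hypothesis rho_rep : is_rep Lam LamF rho.

Lemma rep0 g : gen_ok Lam LamF g -> rho g 0 = 0.
Proof.
case: rho_rep => lin _ _ ok_g.
by have := lin g ok_g (-1) 0 0; rewrite scaler0 add0r scaleN1r addNr.
Qed.

Lemma repZ g a u : gen_ok Lam LamF g -> rho g (a *: u) = a *: rho g u.
Proof.
case: rho_rep => lin _ _ ok_g.
by have := lin g ok_g a u 0; rewrite addr0 rep0 // addr0.
Qed.

Lemma repB g u w : gen_ok Lam LamF g -> rho g (u - w) = rho g u - rho g w.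
Proof.
case: rho_rep => lin _ _ ok_g.
by have := lin g ok_g (-1) w u; rewrite !scaleN1r addrC => ->; rewrite addrC.
Qed.

Lemma rep_gen_unit_commutator p q r s u :
    basis_ok Lam LamF p -> basis_ok Lam LamF q ->
    basis_ok Lam LamF r -> basis_ok Lam LamF s ->
  rho (gen_unit p q) (rho (gen_unit r s) u) - rho (gen_unit r s) (rho (gen_unit p q) u)
  = (q == r)%:R *: rho (gen_unit p s) u - (s == p)%:R *: rho (gen_unit r q) u.
Proof.
case: rho_rep => _ _ bracket ok_p ok_q ok_r ok_s.
have ok := @gen_unit_ok Lam LamF.
rewrite -(bracket _ _ [:: ((q == r)%:R, gen_unit p s); (- (s == p)%:R, gen_unit r q)]);
  try exact: ok.
- by rewrite !big_cons big_nil addr0 scaleNr.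
- by rewrite /= andbT; apply/andP; split; apply: ok.
move=> b _ b'; rewrite brcoef_gen_unit /opcoef !big_cons big_nil /= addr0.
rewrite !count_act_gen_unit mulNr -!natrM !mulnb.
by rewrite (eq_sym q r) (eq_sym s p) (andbCA (r == q)) (andbCA (p == s)).
Qed.

End Representation.

Lemma unitary_formZl (C : numClosedFieldType) (V : lmodType C) Lam LamF
    (rho : gen -> V -> V) (form : V -> V -> C) :
  unitary_form Lam LamF rho form -> forall a u w, form (a *: u) w = a * form u w.
Proof.
case=> lin _ _ _ a u w.
have form0 : form 0 w = 0 by have := lin (-1) w w w; rewrite scaleN1r addNr mulN1r addNr.
by have := lin a u 0 w; rewrite addr0 form0 addr0.
Qed.

Theorem lemma14 (R : realType) (Lam LamF : nat) (hLam : (0 < Lam)%N) (hLamF : (0 < LamF)%N)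
  (V : lmodType R[i]) (rho : gen -> V -> V) (h : gen -> R[i]) (v : V)
  (form : V -> V -> R[i])
  (Hrep : is_rep Lam LamF rho)
  (Hirr : irreducible Lam LamF rho)
  (Hlw : lowest_weight Lam LamF rho h v)
  (Hunit : unitary_form Lam LamF rho form)
  (Is Js : seq nat) (l1 l2 l3 l4 : nat)
  (hI_ok : seq_ok Lam Is) (hJ_ok : seq_ok Lam Js)
  (hl1 : lam_ok LamF l1) (hl2 : lam_ok LamF l2)
  (hl3 : lam_ok LamF l3) (hl4 : lam_ok LamF l4)
  (hgt : seqgt (Is ++ [:: l1; l3]) (Js ++ [:: l2; l4])) :
  exists n : nat, hI h l2 Js l4 - hI h l1 Is l3 = n%:R.
Proof.
set I : basis := (l1, Is, l3); set J : basis := (l2, Js, l4).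
have ok_I : basis_ok Lam LamF I by apply/and3P.
have ok_J : basis_ok Lam LamF J by apply/and3P.
have ne_JI : (J == I) = false.
  by apply/negbTE/eqP => -[e1 e2 e3]; move: hgt; rewrite e1 e2 e3 seqgt_irr.
have comm := rep_gen_unit_commutator Hrep.
have ok := @gen_unit_ok Lam LamF.
case: (Hlw) => v_neq0 _ _ rho_minus rho_diag.
have formZl := unitary_formZl Hunit.
case: Hunit => _ form_conj form_gt0 form_adj.
set A := rho (gen_unit I J); set B := rho (gen_unit J I).
pose H u := rho (gen_unit J J) u - rho (gen_unit I I) u.
set c := hI h l2 Js l4 - hI h l1 Is l3.
have AZ a u : A (a *: u) = a *: A u by rewrite /A (repZ Hrep) ?ok.
have comm_BA u : B (A u) - A (B u) = H u by rewrite comm // !eqxx !scale1r.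
have comm_HA u : H (A u) - A (H u) = - (A u *+ 2).
  rewrite /H /A (repB Hrep) ?ok // opprD addrACA -opprD !comm // ne_JI.
  by rewrite !eqxx !scale1r !scale0r subr0 sub0r -opprD.
have B_v : B v = 0 by rewrite /B rho_minus ?ok //; apply: is_minus_Gen1.
have H_v : H v = c *: v.
  by rewrite /H !rho_diag ?ok ?is_diag_gen_unit // -scalerBl.
have form_adjA u w : form (A u) w = form u (B w).
  by rewrite form_adj ?ok // omega_gen_unit.
have [n not_le] := complex_nat_unbounded c.
have [//|] := unitary_lowest_weight_nat_or_ge AZ comm_BA comm_HA B_v H_v v_neq0 formZl
  form_conj form_gt0 form_adjA n.
by rewrite (negbTE not_le).
Qed.
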